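(* For every $\alpha\ge 1$ and $\beta\ge 1$, there exist a finite set $\mathcal{N}$ of $n$ agents, a finite set $\mathcal{M}$ of feasible centers, a positive integer $k$, and a pseudometric $d$ on $\mathcal{N}\cup\mathcal{M}$ such that no clustering is simultaneously in the $\alpha$-core with respect to the centroid loss $\ell_i(C,x)=d(i,x)$ and in the $\beta$-core with respect to the non-centroid loss $\ell_i(C,x)=\max_{j\in C}d(i,j)$.
   Context: Given agents $\mathcal{N}$ ($|\mathcal{N}|=n$), feasible centers $\mathcal{M}$, a positive integer $k$, and loss functions $\ell_i(C,x)\ge0$ defined for $C\subseteq\mathcal{N}$ with $i\in C$ and $x\in\mathcal{M}$: a clustering is $\mathcal{X}=\{(C_1,x_1),\dots,(C_k,x_k)\}$ where $C_1,\dots,C_k$ are pairwise disjoint subsets of $\mathcal{N}$ (some possibly empty) with union $\mathcal{N}$ and $x_t\in\mathcal{M}$; $\ell_i(\mathcal{X})=\ell_i(C_t,x_t)$ for the unique $t$ with $i\in C_t$. For $\alpha\ge1$, $\mathcal{X}$ is in the $\alpha$-core (with respect to the losses $\ell_i$) if there is no $S\subseteq\mathcal{N}$ with $|S|\ge n/k$ and $y\in\mathcal{M}$ such that $\alpha\cdot\ell_i(S,y)<\ell_i(\mathcal{X})$ for all $i\in S$. A pseudometric satisfies $d(x,x)=0$, symmetry and the triangle inequality. *)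

From HB Require Import structures.
From mathcomp Require Import all_boot all_order all_algebra.
From mathcomp Require Import reals.
Set Implicit Arguments. Unset Strict Implicit. Unset Printing Implicit Defensive.
Import Order.TTheory GRing.Theory Num.Theory.
Local Open Scope ring_scope.

Definition pseudometric (R : realType) (T : Type) (d : T -> T -> R) : Prop :=
  [/\ forall x, d x x = 0,
      forall x y, d x y = d y x &
      forall x y z, d x z <= d x y + d y z].

Record clustering (N M : finType) (k : nat) := Clustering {
  cl_set : 'I_k -> {set N};
  cl_ctr : 'I_k -> M;
  cl_disj : forall s t : 'I_k, s != t -> [disjoint cl_set s & cl_set t];
  cl_cover : forall i : N, exists t : 'I_k, i \in cl_set t
}.

(* Loss function l i C x, meaningful for i \in C. *)
Definition lossfun (R : realType) (N M : finType) := N -> {set N} -> M -> R.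

Definition in_core (R : realType) (N M : finType) (k : nat)
  (alpha : R) (l : lossfun R N M) (X : clustering N M k) : Prop :=
  ~ exists (S : {set N}) (y : M),
      (#|N|%:R / k%:R <= #|S|%:R :> R) /\
      forall i, i \in S -> forall t : 'I_k, i \in cl_set X t ->
        alpha * l i S y < l i (cl_set X t) (cl_ctr X t).

Definition centroid_loss (R : realType) (N M : finType)
  (d : N + M -> N + M -> R) : lossfun R N M :=
  fun i _ x => d (inl i) (inr x).

(* Non-centroid loss: l_i(C,x) = max_{j in C} d(i,j)
   (max with 0 is harmless: d >= 0 and i \in C). *)
Definition noncentroid_loss (R : realType) (N M : finType)
  (d : N + M -> N + M -> R) : lossfun R N M :=
  fun i C _ => \big[Num.max/0]_(j in C) d (inl i) (inl j).

From HB Require Import structures.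
From mathcomp Require Import all_boot all_order all_algebra.
From mathcomp Require Import reals.
From mathcomp Require Import zify.
Set Implicit Arguments. Unset Strict Implicit. Unset Printing Implicit Defensive.
Import Order.TTheory GRing.Theory Num.Theory.

(* Take [k = 3] and six agents: on each of two sides of an ultrametric, a loner and
   a close pair, with the centers placed at the pair members.  Distances are
   [0, 1, L, L^2] with [L = alpha + beta], so multiplying a distance by [alpha] or
   [beta] never reaches the next level: every core condition becomes a strict
   comparison of tree levels, and any two agents form a coalition of size [n / k].

   Non-centroid stability first puts one member of each pair in a cluster inside
   its pair; the two loners must then share the third cluster, which reaches across
   the sides, so no pair member may join it and the clusters are the two pairs and
   the two loners.  For centroid stability, if the loners' center lies on the other
   side from loner [l], then [l] and either member of its side deviate to the center
   at that member, unless the pair's center is exactly there, which cannot hold for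
   both members.  So the loners' center would have to lie on both sides. *)

Section CommonPrefix.
Variable T : eqType.

Fixpoint lcp (s t : seq T) : nat :=
  match s, t with
  | x :: s', y :: t' => if x == y then (lcp s' t').+1 else 0
  | _, _ => 0
  end.

Lemma lcpC s t : lcp s t = lcp t s.
Proof. by elim: s t => [|x s IH] [|y t] //=; rewrite eq_sym IH. Qed.

Lemma lcpss s : lcp s s = size s.
Proof. by elim: s => //= x s ->; rewrite eqxx. Qed.

Lemma lcp_ultra s t u : minn (lcp s t) (lcp t u) <= lcp s u.
Proof.
elim: s t u => [|x s IH] [|y t] [|z u] //=; rewrite ?min0n ?minn0 //.
have [<-|_] := eqVneq x y; last by rewrite min0n.
have [_|_] := eqVneq x z; last by rewrite minn0.
by rewrite minnSS ltnS.
Qed.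

Lemma sub_lcp_ultra h s t u : h - lcp s u <= maxn (h - lcp s t) (h - lcp t u).
Proof. have := lcp_ultra s t u; lia. Qed.

End CommonPrefix.

Local Open Scope ring_scope.

Lemma ultrametric_levels_pseudometric (R : realType) (T : Type)
    (f : nat -> R) (e : T -> T -> nat) :
  f 0%N = 0 -> {homo f : m n / (m <= n)%N >-> m <= n} ->
  (forall x, e x x = 0%N) -> (forall x y, e x y = e y x) ->
  (forall x y z, (e x z <= maxn (e x y) (e y z))%N) ->
  pseudometric (fun x y => f (e x y)).
Proof.
move=> f0 f_homo e_refl e_sym e_ultra.
have f_ge0 n : 0 <= f n by rewrite -f0 f_homo.
split=> [x|x y|x y z]; [by rewrite e_refl | by rewrite e_sym |].
have := e_ultra x y z; rewrite leq_max => /orP[] /f_homo le_f.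
- by rewrite (le_trans le_f) ?lerDl.
- by rewrite (le_trans le_f) ?lerDr.
Qed.

Section Tower.
Variables (R : numDomainType) (L : R).

Definition tower (n : nat) : R := if n is n'.+1 then L ^+ n' else 0.

Lemma tower_sep (c : R) m n : 1 <= c -> c < L -> (m < n)%N -> c * tower m < tower n.
Proof.
move=> c_ge1 c_ltL.
have L_gt0 : 0 < L by rewrite (lt_le_trans ltr01) // (le_trans c_ge1) ?ltW.
case: n => [|n] //=; case: m => [|m] /= lt_mn; first by rewrite mulr0 exprn_gt0.
apply: (@lt_le_trans _ _ (L ^+ m.+1)); first by rewrite exprS ltr_pM2r ?exprn_gt0.
by rewrite ler_weXn2l // (le_trans c_ge1) ?ltW.
Qed.

Hypothesis L_ge1 : 1 <= L.

Lemma tower_homo : {homo tower : m n / (m <= n)%N >-> m <= n}.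
Proof.
case=> [|m] [|n] //= le_mn; last by rewrite ler_weXn2l.
by rewrite exprn_ge0 // (le_trans ler01).
Qed.

Lemma tower_ge0 n : 0 <= tower n.
Proof. exact: (tower_homo (leq0n n)). Qed.

End Tower.

Section ClusterOf.
Variables (N M : finType) (k : nat) (X : clustering N M k).

Definition cl_of (i : N) : 'I_k := xchoose (cl_cover X i).

Definition center_of (i : N) : M := cl_ctr X (cl_of i).

Lemma mem_cl_of i : i \in cl_set X (cl_of i).
Proof. exact: (xchooseP (cl_cover X i)). Qed.

Lemma cl_of_unique i t : i \in cl_set X t -> t = cl_of i.
Proof.
move=> i_t; apply/eqP; apply: contraT => /(@cl_disj _ _ _ X)/disjointFr/(_ i_t).
by rewrite mem_cl_of.
Qed.

Lemma pair_deviation_not_in_core (R : realType) (c : R) (l : lossfun R N M) i j y :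
  (#|N| <= 2 * k)%N -> i != j ->
  c * l i [set i; j] y < l i (cl_set X (cl_of i)) (center_of i) ->
  c * l j [set i; j] y < l j (cl_set X (cl_of j)) (center_of j) ->
  ~ in_core c l X.
Proof.
move=> small ij dev_i dev_j; apply; exists [set i; j], y; split.
  rewrite cards2 ij; have [->|k_gt0] := posnP k; first by rewrite invr0 mulr0.
  by rewrite ler_pdivrMr ?ltr0n // -natrM ler_nat.
by move=> u; rewrite !inE => /orP[]/eqP-> t /cl_of_unique->.
Qed.

End ClusterOf.

Section TowerMetricCores.
Variables (R : realType) (N M : finType) (k : nat) (L c : R).
Variable e : N + M -> N + M -> nat.
Hypotheses (c_ge1 : 1 <= c) (c_ltL : c < L) (small : (#|N| <= 2 * k)%N).
Variable X : clustering N M k.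

Let d p q := tower L (e p q).

Lemma centroid_core_pair i j y : in_core c (centroid_loss d) X -> i != j ->
  (e (inl i) (inr (center_of X i)) <= e (inl i) (inr y))%N \/
  (e (inl j) (inr (center_of X j)) <= e (inl j) (inr y))%N.
Proof.
move=> core ij.
have [|lt_i] := leqP; first by left.
have [|lt_j] := leqP; first by right.
by case: (pair_deviation_not_in_core (y := y) small ij _ _ core); apply: tower_sep.
Qed.

Hypothesis e_refl : forall p, e p p = 0%N.

Lemma noncentroid_core_pair i j : in_core c (noncentroid_loss d) X -> i != j ->
  (forall w, cl_of X w = cl_of X i -> e (inl i) (inl w) <= e (inl i) (inl j))%N \/
  (forall w, cl_of X w = cl_of X j -> e (inl j) (inl w) <= e (inl j) (inl i))%N.
Proof.
move=> core ij; have L_ge1 : 1 <= L := le_trans c_ge1 (ltW c_ltL).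
have deviates u v w y : cl_of X w = cl_of X u ->
    (e (inl u) (inl v) < e (inl u) (inl w))%N ->
    c * noncentroid_loss d u [set u; v] y <
    noncentroid_loss d u (cl_set X (cl_of X u)) (center_of X u).
  move=> wu lt_vw; apply: (@le_lt_trans _ _ (c * d (inl u) (inl v))).
    rewrite ler_pM2l ?(lt_le_trans ltr01) //.
    apply: bigmax_le => [|x]; first exact: tower_ge0.
    by rewrite !inE => /orP[]/eqP->; rewrite /d ?e_refl ?tower_ge0.
  apply: (@lt_le_trans _ _ (d (inl u) (inl w))); first exact: tower_sep.
  by apply: (@le_bigmax_cond _ _ _ _ w (fun x => x \in _)); rewrite -wu mem_cl_of.
have [/forallP all_i|/forallPn[wi]] := boolP [forall w,
    (cl_of X w == cl_of X i) ==> (e (inl i) (inl w) <= e (inl i) (inl j))%N].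
  by left=> w /eqP; apply/implyP/all_i.
rewrite negb_imply -ltnNge => /andP[/eqP wi_i lt_i].
have [/forallP all_j|/forallPn[wj]] := boolP [forall w,
    (cl_of X w == cl_of X j) ==> (e (inl j) (inl w) <= e (inl j) (inl i))%N].
  by right=> w /eqP; apply/implyP/all_j.
rewrite negb_imply -ltnNge => /andP[/eqP wj_j lt_j].
case: (pair_deviation_not_in_core (y := center_of X i) small ij _ _ core).
  exact: deviates wi_i lt_i.
by rewrite setUC; exact: deviates wj_j lt_j.
Qed.

End TowerMetricCores.

Lemma eq_avoid2_card3 (T : finType) (x y p q : T) : (#|T| <= 3)%N ->
  p != q -> x != p -> x != q -> y != p -> y != q -> x = y.
Proof.
move=> cardT pq xp xq yp yq; apply/eqP; apply: contraTT cardT => xy.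
have card4 : #|x |: (y |: (p |: [set q]))| = 4%N.
  by rewrite !cardsU1 cards1 !inE !negb_or xy xp xq yp yq pq.
by rewrite -ltnNge -card4 max_card.
Qed.

(* An agent is [(s, None)], the loner of side [s], or [(s, Some b)], member [b] of
   the close pair of side [s]; the center [(s, b)] sits at member [b] of side [s].
   Points are leaves of a binary tree of depth 3 addressed by root paths (the third
   bit of a loner is a dummy), and [lev] is the height of their lowest common
   ancestor. *)
Notation agent := (bool * option bool)%type.
Notation center := (bool * bool)%type.

Definition loner (s : bool) : agent := (s, None).
Definition member (s b : bool) : agent := (s, Some b).
Definition site (y : center) : agent := member y.1 y.2.

Definition addr (u : agent) : seq bool := [:: u.1; u.2 != None; odflt false u.2].
Definition lev (u v : agent) : nat := 3 - lcp (addr u) (addr v).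

Definition location (p : agent + center) : agent :=
  match p with inl i => i | inr y => site y end.
Definition plev (p q : agent + center) : nat := lev (location p) (location q).

Lemma lev_refl u : lev u u = 0%N.
Proof. by rewrite /lev lcpss. Qed.

Lemma lev_sym u v : lev u v = lev v u.
Proof. by rewrite /lev lcpC. Qed.

Lemma lev_loner_member s b : lev (loner s) (member s b) = 2%N.
Proof. by case: s. Qed.

Lemma lev_member_site0 s b y : lev (member s b) (site y) = 0%N -> y = (s, b).
Proof. by case: s b y => [] [] [[] []]. Qed.

Lemma plev_refl p : plev p p = 0%N.
Proof. exact: lev_refl. Qed.

Lemma tower_plev_pseudometric (R : realType) (L : R) : 1 <= L ->
  pseudometric (fun p q => tower L (plev p q)).
Proof.
move=> L_ge1; apply: ultrametric_levels_pseudometric => //.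
- exact: tower_homo.
- exact: plev_refl.
- by move=> p q; apply: lev_sym.
- by move=> p q r; apply: sub_lcp_ultra.
Qed.

Lemma member_neq s : member s false != member s true.
Proof. by case: s. Qed.

Lemma loner_neq_member s b : loner s != member s b.
Proof. by case: s. Qed.

Lemma card_agent : #|{: agent}| = 6%N.
Proof. by rewrite card_prod card_option card_bool. Qed.

Definition cluster_within (X : clustering agent center 3) (u : agent) (n : nat) :=
  forall w, cl_of X w = cl_of X u -> (lev u w <= n)%N.

Lemma cl_of_apart X u w n :
  cluster_within X u n -> (n < lev u w)%N -> cl_of X w != cl_of X u.
Proof. by move=> within; apply: contraTneq => /within; rewrite -leqNgt. Qed.

Section NoncentroidCore.
Variables (R : realType) (L c : R) (X : clustering agent center 3).
Hypotheses (c_ge1 : 1 <= c) (c_ltL : c < L).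
Hypothesis core : in_core c (noncentroid_loss (fun p q => tower L (plev p q))) X.

Lemma noncentroid_core_within u v : u != v ->
  cluster_within X u (lev u v) \/ cluster_within X v (lev v u).
Proof.
exact: (noncentroid_core_pair (k := 3) c_ge1 c_ltL (eq_leq card_agent) plev_refl core).
Qed.

Lemma member_isolated s : exists b, cluster_within X (member s b) 1.
Proof.
have [within|within] := noncentroid_core_within (member_neq s).
  by exists false => w /within; case: s {within}.
by exists true => w /within; case: s {within}.
Qed.

Lemma loners_together : cl_of X (loner false) = cl_of X (loner true).
Proof.
have [bF isoF] := member_isolated false; have [bT isoT] := member_isolated true.
by apply: (@eq_avoid2_card3 _ _ _ (cl_of X (member false bF)) (cl_of X (member true bT)));
  rewrite ?card_ord //; first [apply: (cl_of_apart isoF) | apply: (cl_of_apart isoT)].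
Qed.

Lemma member_within2 s b : cluster_within X (member s b) 2.
Proof.
have [within|within] := noncentroid_core_within (loner_neq_member s b).
  suff: (lev (loner s) (loner (~~ s)) <= lev (loner s) (member s b))%N by case: s {within}.
  by apply: within; case: s; rewrite loners_together.
by move=> w /within; rewrite [lev _ (loner s)]lev_sym lev_loner_member.
Qed.

Lemma members_together s : cl_of X (member s false) = cl_of X (member s true).
Proof.
have [b isoS] := member_isolated s; have [b' isoS'] := member_isolated (~~ s).
suff pin b0 : cl_of X (member s b0) = cl_of X (member s b) by rewrite !pin.
apply: (@eq_avoid2_card3 _ _ _ (cl_of X (loner (~~ s))) (cl_of X (member (~~ s) b')));
  rewrite ?card_ord //.
- by apply: (cl_of_apart isoS'); case: s {isoS isoS'}.
- by rewrite eq_sym; apply: (cl_of_apart (@member_within2 s b0)); case: s {isoS isoS'}.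
- by apply: (cl_of_apart isoS'); case: s {isoS isoS'}.
- by rewrite eq_sym; apply: (cl_of_apart isoS); case: s {isoS isoS'}.
- by apply: (cl_of_apart isoS'); case: s {isoS isoS'}.
Qed.

End NoncentroidCore.

Section CentroidCore.
Variables (R : realType) (L c : R) (X : clustering agent center 3).
Hypotheses (c_ge1 : 1 <= c) (c_ltL : c < L).
Hypotheses (loners : cl_of X (loner false) = cl_of X (loner true))
  (members : forall s, cl_of X (member s false) = cl_of X (member s true)).
Hypothesis core : in_core c (centroid_loss (fun p q => tower L (plev p q))) X.

Lemma centroid_core_nearer i j y : i != j ->
  (lev i (site (center_of X i)) <= lev i (site y))%N \/
  (lev j (site (center_of X j)) <= lev j (site y))%N.
Proof.
exact: (centroid_core_pair (k := 3) c_ge1 c_ltL (eq_leq card_agent) y core).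
Qed.

Lemma loner_center_same_side s : (lev (loner s) (site (center_of X (loner s))) <= 2)%N.
Proof.
rewrite leqNgt; apply/negP => far.
have pinned b : center_of X (member s b) = (s, b).
  have [|] := centroid_core_nearer (s, b) (loner_neq_member s b).
    by rewrite lev_loner_member leqNgt far.
  by rewrite [P in (_ <= P)%N]lev_refl leqn0 => /eqP /lev_member_site0.
have := pinned true.
by rewrite /center_of -members -/(center_of X _) pinned => /(congr1 snd).
Qed.

Lemma no_centroid_core : False.
Proof.
have := loner_center_same_side false; have := loner_center_same_side true.
by rewrite /center_of loners; case: (cl_ctr X _) => [[] []].
Qed.

End CentroidCore.

Theorem mainTheorem2 (R : realType) (alpha beta : R) :
  1 <= alpha -> 1 <= beta ->
  exists (N M : finType) (k : nat) (d : N + M -> N + M -> R),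
    [/\ (0 < #|N|)%N, (0 < #|M|)%N, (0 < k)%N, pseudometric d &
      forall X : clustering N M k,
        ~ (in_core alpha (centroid_loss d) X /\
           in_core beta (noncentroid_loss d) X)].
Proof.
move=> alpha_ge1 beta_ge1; pose L := alpha + beta.
have alpha_ltL : alpha < L by rewrite ltrDl (lt_le_trans ltr01).
have beta_ltL : beta < L by rewrite ltrDr (lt_le_trans ltr01).
have L_ge1 : 1 <= L := le_trans alpha_ge1 (ltW alpha_ltL).
exists agent, center, 3%N, (fun p q => tower L (plev p q)); split.
- by rewrite card_agent.
- by rewrite card_prod card_bool.
- by [].
- exact: tower_plev_pseudometric L_ge1.
move=> X [centroid_core noncentroid_core].
apply: (no_centroid_core alpha_ge1 alpha_ltL _ _ centroid_core).
  exact: loners_together beta_ge1 beta_ltL noncentroid_core.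
exact: members_together beta_ge1 beta_ltL noncentroid_core.
Qed.
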